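(* The following rules are sound, i.e. for every instance, if all premisses are valid then the conclusion is valid: $(\top R)$: $\Gamma\Rightarrow\Delta,\top$ (no premisses); $(\mathrm{lit}L)$: from $N_c,\Gamma\Rightarrow P_c$ infer $N_c,\Gamma\Rightarrow\Delta$; $(\mathrm{lit}R)$: from $P_c,\Gamma\Rightarrow$ (empty succedent) infer $\Gamma\Rightarrow\Delta,N_c$; for a Venn diagram $d=(L,\mathcal Z(L),S)$ with $|S|>1$ and $d_i=(L,\mathcal Z(L),S_i)$ ($i=1,2$) with $S_1\cup S_2=S$: $(\mathrm{sep}L)$: from $d_1,\Gamma\Rightarrow\Delta$ and $d_2,\Gamma\Rightarrow\Delta$ infer $d,\Gamma\Rightarrow\Delta$, and $(\mathrm{sep}R)$: from $\Gamma\Rightarrow\Delta,d_1,d_2$ infer $\Gamma\Rightarrow\Delta,d$; for a Venn diagram $d$ whose only shaded zone is $z=(\{n_1,\dots,n_k\},\{o_1,\dots,o_l\})$: $(\mathrm{dec}L)$: from $P_{n_1},\dots,P_{n_k},N_{o_1},\dots,N_{o_l},\Gamma\Rightarrow\Delta$ infer $d,\Gamma\Rightarrow\Delta$, and $(\mathrm{dec}R)$: from $\Gamma\Rightarrow\Delta,P_{n_i}$ for all $1\le i\le k$ and $\Gamma\Rightarrow\Delta,N_{o_j}$ for all $1\le j\le l$ infer $\Gamma\Rightarrow\Delta,d$. Here $\Gamma,\Delta$ are arbitrary finite multisets of compound diagrams and $c\in\mathcal V$.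
   Context: Fix a countably infinite set $\mathcal V$ of propositional variables. A Heyting algebra $(H,\vee,\wedge,\to,0,1)$ is a bounded distributive lattice with a binary operation $\to$ such that $c\wedge a\le b\iff c\le a\to b$; $-a:=a\to0$; empty meets are $1$, empty joins $0$. A valuation is a map $v:\mathcal V\to H$. For a finite $L\subset\mathcal V$, a zone over $L$ is a pair $z=(\mathrm{in}(z),\mathrm{out}(z))$ of disjoint subsets of $L$ with union $L$; $\mathcal Z(L)$ is the set of all zones over $L$; $v(z)=\bigwedge_{c\in\mathrm{in}(z)}v(c)\wedge\bigwedge_{c\in\mathrm{out}(z)}-v(c)$ and $m_v(z)=\big(\bigwedge_{c\in\mathrm{in}(z)}v(c)\big)\to\big(\bigvee_{c\in\mathrm{out}(z)}v(c)\big)$. Unitary diagrams are of three kinds: Venn diagrams $d=(L,\mathcal Z(L),S)$, $S\subseteq\mathcal Z(L)$ shaded, $[\![d]\!]_v=\bigvee_{z\in S}v(z)$; pure Euler diagrams $d=(L,Z)$, $Z\subseteq\mathcal Z(L)$, missing zones $M(d)=\mathcal Z(L)\setminus Z$, $[\![d]\!]_v=\bigwedge_{z\in M(d)}m_v(z)$; Euler–Venn diagrams $d=(L,Z,S)$, $S\subseteq Z\subseteq\mathcal Z(L)$, $[\![d]\!]_v=[\![(L,Z)]\!]_v\to[\![(L,\mathcal Z(L),S)]\!]_v$. Special Venn diagrams: $\top=(\emptyset,\{(\emptyset,\emptyset)\},\{(\emptyset,\emptyset)\})$, $P_c=(\{c\},\mathcal Z(\{c\}),\{(\{c\},\emptyset)\})$,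 $N_c=(\{c\},\mathcal Z(\{c\}),\{(\emptyset,\{c\})\})$. Compound diagrams are built from unitary ones with $\wedge,\vee,\to$, interpreted by meet, join and Heyting implication. A sequent $\Gamma\Rightarrow\Delta$ (finite multisets of compound diagrams) is valid iff for every Heyting algebra and valuation $v$, $\bigwedge_{D\in\Gamma}[\![D]\!]_v\le\bigvee_{E\in\Delta}[\![E]\!]_v$. *)

From HB Require Import structures.
From mathcomp Require Import all_boot all_order.
From mathcomp Require Import finmap.
Set Implicit Arguments. Unset Strict Implicit. Unset Printing Implicit Defensive.
Import Order.TTheory.
Local Open Scope order_scope.
Local Open Scope fset_scope.

Definition var := nat.

Definition zone := ({fset var} * {fset var})%type.
Definition zin (z : zone) : {fset var} := z.1.
Definition zout (z : zone) : {fset var} := z.2.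

(* Z(L): all pairs (A, B) of disjoint subsets of L with A `|` B = L,
   i.e. all (A, L `\` A) with A a subset of L. *)
Definition zonesOf (L : {fset var}) : {fset zone} :=
  [fset ((A, L `\` A) : zone) | A in fpowerset L].

Inductive udiag :=
  | Venn of {fset var} & {fset zone}                   (* (L, Z(L), S) *)
  | Euler of {fset var} & {fset zone}
  | EulerVenn of {fset var} & {fset zone} & {fset zone}.

Definition wf_udiag (u : udiag) : bool :=
  match u with
  | Venn L Sh => Sh `<=` zonesOf L
  | Euler L Zs => Zs `<=` zonesOf L
  | EulerVenn L Zs Sh => (Sh `<=` Zs) && (Zs `<=` zonesOf L)
  end.

Inductive cdiag :=
  | Unit of udiag
  | CAnd of cdiag & cdiag
  | COr of cdiag & cdiag
  | CImp of cdiag & cdiag.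

Fixpoint wf_cdiag (D : cdiag) : bool :=
  match D with
  | Unit u => wf_udiag u
  | CAnd D1 D2 | COr D1 D2 | CImp D1 D2 => wf_cdiag D1 && wf_cdiag D2
  end.

Definition heyting_imp (d : Order.disp_t) (H : tbDistrLatticeType d)
  (imp : H -> H -> H) : Prop :=
  forall a b c : H, (Order.meet c a <= b) = (c <= imp a b).

Section Semantics.
Context (d : Order.disp_t) (H : tbDistrLatticeType d) (imp : H -> H -> H)
  (v : var -> H).

Definition hneg (a : H) : H := imp a \bot.

Definition zval (z : zone) : H :=
  Order.meet (\big[Order.meet / \top]_(c <- zin z) v c)
             (\big[Order.meet / \top]_(c <- zout z) hneg (v c)).

Definition mval (z : zone) : H :=
  imp (\big[Order.meet / \top]_(c <- zin z) v c)
      (\big[Order.join / \bot]_(c <- zout z) v c).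

Definition venn_sem (S : {fset zone}) : H := \big[Order.join / \bot]_(z <- S) zval z.

Definition euler_sem (L : {fset var}) (Z : {fset zone}) : H :=
  \big[Order.meet / \top]_(z <- zonesOf L `\` Z) mval z.

Definition usem (u : udiag) : H :=
  match u with
  | Venn _ Sh => venn_sem Sh
  | Euler L Zs => euler_sem L Zs
  | EulerVenn L Zs Sh => imp (euler_sem L Zs) (venn_sem Sh)
  end.

Fixpoint csem (D : cdiag) : H :=
  match D with
  | Unit u => usem u
  | CAnd D1 D2 => Order.meet (csem D1) (csem D2)
  | COr D1 D2 => Order.join (csem D1) (csem D2)
  | CImp D1 D2 => imp (csem D1) (csem D2)
  end.

End Semantics.

(* Sequents: finite multisets represented as lists. *)
Definition valid (Gamma Delta : seq cdiag) : Prop :=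
  forall (d : Order.disp_t) (H : tbDistrLatticeType d) (imp : H -> H -> H),
    heyting_imp imp -> forall v : var -> H,
    \big[Order.meet / \top]_(D <- Gamma) csem imp v D <=
    \big[Order.join / \bot]_(E <- Delta) csem imp v E.

Definition vtop : cdiag := Unit (Venn fset0 [fset ((fset0, fset0) : zone)]).
Definition Pc (c : var) : cdiag :=
  Unit (Venn [fset c] [fset (([fset c], fset0) : zone)]).
Definition Nc (c : var) : cdiag :=
  Unit (Venn [fset c] [fset ((fset0, [fset c]) : zone)]).

Definition wf_ctx (G : seq cdiag) : bool := all wf_cdiag G.

Definition topR_sound : Prop :=
  forall Gamma Delta, wf_ctx Gamma -> wf_ctx Delta ->
    valid Gamma (vtop :: Delta).

Definition litL_sound : Prop :=
  forall (c : var) Gamma Delta, wf_ctx Gamma -> wf_ctx Delta ->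
    valid (Nc c :: Gamma) [:: Pc c] -> valid (Nc c :: Gamma) Delta.

Definition litR_sound : Prop :=
  forall (c : var) Gamma Delta, wf_ctx Gamma -> wf_ctx Delta ->
    valid (Pc c :: Gamma) [::] -> valid Gamma (Nc c :: Delta).

Definition sepL_sound : Prop :=
  forall (L : {fset var}) (S S1 S2 : {fset zone}) Gamma Delta,
    wf_ctx Gamma -> wf_ctx Delta ->
    S `<=` zonesOf L -> (1 < #|` S|)%N -> S1 `|` S2 = S ->
    valid (Unit (Venn L S1) :: Gamma) Delta ->
    valid (Unit (Venn L S2) :: Gamma) Delta ->
    valid (Unit (Venn L S) :: Gamma) Delta.

Definition sepR_sound : Prop :=
  forall (L : {fset var}) (S S1 S2 : {fset zone}) Gamma Delta,
    wf_ctx Gamma -> wf_ctx Delta ->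
    S `<=` zonesOf L -> (1 < #|` S|)%N -> S1 `|` S2 = S ->
    valid Gamma (Unit (Venn L S1) :: Unit (Venn L S2) :: Delta) ->
    valid Gamma (Unit (Venn L S) :: Delta).

Definition decL_sound : Prop :=
  forall (L : {fset var}) (z : zone) Gamma Delta,
    wf_ctx Gamma -> wf_ctx Delta -> z \in zonesOf L ->
    valid ([seq Pc n | n <- zin z] ++ [seq Nc o | o <- zout z] ++ Gamma) Delta ->
    valid (Unit (Venn L [fset z]) :: Gamma) Delta.

Definition decR_sound : Prop :=
  forall (L : {fset var}) (z : zone) Gamma Delta,
    wf_ctx Gamma -> wf_ctx Delta -> z \in zonesOf L ->
    (forall n, n \in zin z -> valid Gamma (Pc n :: Delta)) ->
    (forall o, o \in zout z -> valid Gamma (Nc o :: Delta)) ->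
    valid Gamma (Unit (Venn L [fset z]) :: Delta).

(* A sequent is valid iff the inequality holds pointwise in every Heyting
   algebra, so each rule reduces to an inequality between lattice terms.  A
   Venn diagram denotes the join of its shaded zone values, hence splitting the
   shading splits the join (sep); a one-zone diagram denotes the meet of the
   literals P_n, N_o of the zone (dec, where the right rule needs
   distributivity of join over meet); the literal rules are a /\ -a <= 0 and
   the adjunction defining -a. *)

From mathcomp Require Import all_boot all_order finmap.
Set Implicit Arguments. Unset Strict Implicit. Unset Printing Implicit Defensive.
Import Order.TTheory.
Local Open Scope fset_scope.
Local Open Scope order_scope.

Lemma big_join_fsetU disp (L : bLatticeType disp) (I : choiceType)
    (A B : {fset I}) (F : I -> L) :
  \big[Order.join / \bot]_(i <- (A `|` B)%fset) F i =
  \big[Order.join / \bot]_(i <- A) F i `|` \big[Order.join / \bot]_(i <- B) F i.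
Proof.
apply/le_anti/andP; split.
  apply/joinsP_seq => i; rewrite in_fsetU => /orP[iA|iB] _.
    by apply/lexUl/joins_sup_seq.
  by apply/lexUr/joins_sup_seq.
by rewrite leUx; apply/andP; split; apply/joinsP_seq => i iX _;
  apply: joins_sup_seq; rewrite // in_fsetU iX ?orbT.
Qed.

Lemma join_bigmeetl disp (L : tbDistrLatticeType disp) (I : Type) (r : seq I)
    (F : I -> L) (a : L) :
  \big[Order.meet / \top]_(i <- r) F i `|` a = \big[Order.meet / \top]_(i <- r) (F i `|` a).
Proof. by elim: r => [|i r IHr]; rewrite ?big_nil ?join1x // !big_cons joinIl IHr. Qed.

Section Semantics.
Variables (disp : Order.disp_t) (H : tbDistrLatticeType disp) (imp : H -> H -> H).
Variable v : var -> H.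

Let sem := csem imp v.

Lemma csem_vtop : sem vtop = \top.
Proof. by rewrite /sem /= /venn_sem big_seq_fset1 /zval /= !big_nil meetx1. Qed.

Lemma csem_Pc c : sem (Pc c) = v c.
Proof.
by rewrite /sem /= /venn_sem big_seq_fset1 /zval /= big_seq_fset1 big_nil meetx1.
Qed.

Lemma csem_Nc c : sem (Nc c) = hneg imp (v c).
Proof.
by rewrite /sem /= /venn_sem big_seq_fset1 /zval /= big_seq_fset1 big_nil meet1x.
Qed.

Lemma csem_venn1 L z : sem (Unit (Venn L [fset z])) = zval imp v z.
Proof. by rewrite /sem /= /venn_sem big_seq_fset1. Qed.

Lemma csem_vennU L S1 S2 :
  sem (Unit (Venn L (S1 `|` S2)%fset)) =
  sem (Unit (Venn L S1)) `|` sem (Unit (Venn L S2)).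
Proof. exact: big_join_fsetU. Qed.

Lemma big_meet_literals (z : zone) :
  \big[Order.meet / \top]_(D <- [seq Pc n | n <- zin z] ++ [seq Nc o | o <- zout z]) sem D
  = zval imp v z.
Proof.
rewrite big_cat !big_map.
by congr (_ `&` _); apply: eq_bigr => c _; rewrite ?csem_Pc ?csem_Nc.
Qed.

End Semantics.

Lemma himp_meet_le disp (H : tbDistrLatticeType disp) (imp : H -> H -> H) :
  heyting_imp imp -> forall a b : H, imp a b `&` a <= b.
Proof. by move=> himp a b; rewrite himp. Qed.

Lemma topR_valid G D : valid G (vtop :: D).
Proof. by move=> disp H imp _ v; rewrite big_cons csem_vtop join1x lex1. Qed.

Lemma litL_valid c G D : valid (Nc c :: G) [:: Pc c] -> valid (Nc c :: G) D.
Proof.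
move=> hP disp H imp himp v; have := hP disp H imp himp v.
rewrite big_cons big_seq1 csem_Nc csem_Pc => le_c.
apply: (le_trans _ (le0x _)); apply: (le_trans _ (himp_meet_le himp (v c) \bot)).
by rewrite lexI leIl le_c.
Qed.

Lemma litR_valid c G D : valid (Pc c :: G) [::] -> valid G (Nc c :: D).
Proof.
move=> hP disp H imp himp v; have := hP disp H imp himp v.
rewrite big_cons big_nil csem_Pc big_cons csem_Nc => le_bot.
by apply/lexUl; rewrite /hneg -himp meetC.
Qed.

Lemma sepL_valid L S1 S2 G D :
  valid (Unit (Venn L S1) :: G) D -> valid (Unit (Venn L S2) :: G) D ->
  valid (Unit (Venn L (S1 `|` S2)%fset) :: G) D.
Proof.
move=> h1 h2 disp H imp himp v; have := h1 disp H imp himp v; have := h2 disp H imp himp v.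
by rewrite !big_cons csem_vennU meetUl leUx => -> ->.
Qed.

Lemma sepR_valid L S1 S2 G D :
  valid G (Unit (Venn L S1) :: Unit (Venn L S2) :: D) ->
  valid G (Unit (Venn L (S1 `|` S2)%fset) :: D).
Proof.
by move=> h disp H imp himp v; have := h disp H imp himp v; rewrite !big_cons csem_vennU joinA.
Qed.

Lemma decL_valid L z G D :
  valid ([seq Pc n | n <- zin z] ++ [seq Nc o | o <- zout z] ++ G) D ->
  valid (Unit (Venn L [fset z]) :: G) D.
Proof.
move=> h disp H imp himp v; have := h disp H imp himp v.
by rewrite catA big_cat big_meet_literals big_cons csem_venn1.
Qed.

Lemma decR_valid L z G D :
  (forall n, n \in zin z -> valid G (Pc n :: D)) ->
  (forall o, o \in zout z -> valid G (Nc o :: D)) ->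
  valid G (Unit (Venn L [fset z]) :: D).
Proof.
move=> hP hN disp H imp himp v.
rewrite big_cons csem_venn1 /zval joinIl !join_bigmeetl lexI.
apply/andP; split; apply/meetsP_seq => c cz _.
  by have := hP c cz disp H imp himp v; rewrite big_cons csem_Pc.
by have := hN c cz disp H imp himp v; rewrite big_cons csem_Nc.
Qed.

Theorem lemma7 :
  topR_sound /\ litL_sound /\ litR_sound /\ sepL_sound /\ sepR_sound /\
  decL_sound /\ decR_sound.
Proof.
split; first by move=> G D _ _; apply: topR_valid.
split; first by move=> c G D _ _; apply: litL_valid.
split; first by move=> c G D _ _; apply: litR_valid.
split; first by move=> L S S1 S2 G D _ _ _ _ <-; apply: sepL_valid.
split; first by move=> L S S1 S2 G D _ _ _ _ <-; apply: sepR_valid.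
split; first by move=> L z G D _ _ _; apply: decL_valid.
by move=> L z G D _ _ _; apply: decR_valid.
Qed.
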